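(* Let $G$ be a graph, $\boldsymbol{\gamma}\in\mathbb{N}_{\ge0}^{V(G)}$ any vector, $R\in\mathbb{N}_{\ge0}$ and $\phi,\psi\in(0,1)$. If there exists a graph $W$ with embedding $\Pi_{W\mapsto G}$ that is an $(R,\phi,\psi)$-witness of $(G,\boldsymbol{0})$ with respect to $\boldsymbol{\gamma}$, then $G$ is a $\psi^2\phi$-expander.
   Context: Graphs are directed unweighted multigraphs (self-loops allowed); $\deg_G(v)$ counts incident edges with a self-loop counting $2$; $\mathrm{vol}_G(S)=\sum_{v\in S}\deg_G(v)$; for $S\subseteq V$, $\overline{S}=V\setminus S$, $E_G(S,\overline{S})$ is the set of edges with tail in $S$ and head in $\overline{S}$; $\overleftarrow{G}$ is $G$ with edges reversed; for a vector $\boldsymbol{r}$, $\boldsymbol{r}(S)=\sum_{s\in S}\boldsymbol{r}(s)$. A cut $(S,\overline{S})$ is $\phi$-out-sparse if $\mathrm{vol}_G(S)\le\mathrm{vol}_G(\overline{S})$ and $|E_G(S,\overline{S})|<\phi\,\mathrm{vol}_G(S)$; $G$ is a $\phi$-expander if neither $G$ nor $\overleftarrow{G}$ has a $\phi$-out-sparse cut. An embedding $\Pi_{W\mapsto G}$ of a graph $W$ on the same vertex set as $G$ maps each edge $(u,v)$ of $W$ to a $u$-to-$v$ path in $G$; its congestion is the maximum over $e\in E(G)$ of the number of edges of $W$ whose path contains $e$. Given $\boldsymbol{r},\boldsymbol{\gamma}\in\mathbb{N}_{\ge0}^{V(G)}$, $\phi,\psi\in(0,1)$, $R\in\mathbb{N}_{\ge0}$,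 $(W,\Pi_{W\mapsto G})$ is an $(R,\phi,\psi)$-out-witness of $(G,\boldsymbol{r})$ w.r.t. $\boldsymbol{\gamma}$ if (1) $\|\boldsymbol{r}\|_1\le R$; (2) for every $v$, $\deg_W(v)+\boldsymbol{r}(v)\in[\deg_G(v),\frac{1}{\psi}\deg_G(v)]$; (3) for every $S\subseteq V$ with $\boldsymbol{\gamma}(S)\le\boldsymbol{\gamma}(\overline{S})$, $|E_W(S,\overline{S})|+\boldsymbol{r}(S)\ge\psi(\mathrm{vol}_W(S)+\boldsymbol{r}(S))$; (4) $\Pi_{W\mapsto G}$ has congestion at most $\frac{1}{\psi\phi}$. It is an $(R,\phi,\psi)$-witness if moreover $\overleftarrow{W}$ (with the reversed paths) is an $(R,\phi,\psi)$-out-witness of $(\overleftarrow{G},\boldsymbol{r})$ w.r.t. $\boldsymbol{\gamma}$. *)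

From HB Require Import structures.
From mathcomp Require Import all_boot all_order all_algebra.
Set Implicit Arguments. Unset Strict Implicit. Unset Printing Implicit Defensive.
Import Order.TTheory GRing.Theory Num.Theory.

(* A directed multigraph (self-loops allowed) on the finite vertex set V:
   a finite type of edges, each with a tail and a head. *)
Record digraph (V : finType) := Digraph {
  edge : finType;
  tail : edge -> V;
  head : edge -> V }.

Arguments Digraph {V}.

Section Graphs.
Variable V : finType.

Definition rev_graph (G : digraph V) : digraph V :=
  Digraph (edge G) (@head V G) (@tail V G).

(* degree: number of incident edges, a self-loop counting 2 *)
Definition deg (G : digraph V) (v : V) : nat :=
  #|[set e : edge G | tail e == v]| + #|[set e : edge G | head e == v]|.

Definition vol (G : digraph V) (S : {set V}) : nat := \sum_(v in S) deg G v.

Definition cut_out (G : digraph V) (S : {set V}) : nat :=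
  #|[set e : edge G | (tail e \in S) && (head e \notin S)]|.

Definition vsum (r : V -> nat) (S : {set V}) : nat := \sum_(v in S) r v.

Fixpoint is_walk (G : digraph V) (u : V) (p : seq (edge G)) (v : V) : bool :=
  match p with
  | [::] => u == v
  | e :: p' => (tail e == u) && is_walk (head e) p' v
  end.

Definition embedding (W G : digraph V) := forall f : edge W, seq (edge G).

Definition is_embedding (W G : digraph V) (Pi : embedding W G) : Prop :=
  forall f : edge W, is_walk (tail f) (Pi f) (head f).

Definition congestion (W G : digraph V) (Pi : embedding W G) : nat :=
  \max_(e : edge G) #|[set f : edge W | e \in Pi f]|.

Definition rev_embedding (W G : digraph V) (Pi : embedding W G)
  : embedding (rev_graph W) (rev_graph G) :=
  fun f => rev (Pi f).

Section Witness.
Variable F : realFieldType.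
Local Open Scope ring_scope.

Definition out_witness (G : digraph V) (r gamma : V -> nat) (R : nat)
  (phi psi : F) (W : digraph V) (Pi : embedding W G) : Prop :=
  [/\ is_embedding Pi,
      (\sum_(v : V) r v <= R)%N,
      (forall v : V, (deg G v)%:R <= ((deg W v + r v)%N)%:R :> F /\
                     ((deg W v + r v)%N)%:R <= psi^-1 * (deg G v)%:R),
      (forall S : {set V}, (vsum gamma S <= vsum gamma (~: S))%N ->
          psi * ((vol W S + vsum r S)%N)%:R <= ((cut_out W S + vsum r S)%N)%:R)
    & (congestion Pi)%:R <= (psi * phi)^-1].

Definition witness (G : digraph V) (r gamma : V -> nat) (R : nat)
  (phi psi : F) (W : digraph V) (Pi : embedding W G) : Prop :=
  @out_witness G r gamma R phi psi W Pi /\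
  @out_witness (rev_graph G) r gamma R phi psi (rev_graph W) (rev_embedding Pi).

Definition out_sparse (G : digraph V) (phi : F) (S : {set V}) : Prop :=
  (vol G S <= vol G (~: S))%N /\ (cut_out G S)%:R < phi * (vol G S)%:R.

Definition expander (G : digraph V) (phi : F) : Prop :=
  (forall S : {set V}, ~ out_sparse G phi S) /\
  (forall S : {set V}, ~ out_sparse (rev_graph G) phi S).

End Witness.
End Graphs.

From Pilot Require Import Defs.
From HB Require Import structures.
From mathcomp Require Import all_boot all_order all_algebra.
Import Order.TTheory GRing.Theory Num.Theory.
Set Implicit Arguments. Unset Strict Implicit. Unset Printing Implicit Defensive.
Local Open Scope ring_scope.

(* With r = 0, a witness W dominates G in degree and expands by psi across
   every gamma-balanced cut, and since each W-edge leaving S is routed through a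
   G-edge leaving S, congestion at most 1/(psi phi) gives
   psi phi cut_W(S) <= cut_G(S).  Hence a gamma-balanced S satisfies
   psi^2 phi vol_G(S) <= psi^2 phi vol_W(S) <= psi phi cut_W(S) <= cut_G(S).
   Otherwise the complement of S is gamma-balanced, and the witness of the
   reversed graph bounds its outgoing cut in the reversed graph, which is the
   cut of S in G; vol_G(S) <= vol_G(complement) finishes. *)

Section Graphs.
Variable V : finType.

Lemma is_walk_leaves (G : digraph V) (S : {set V}) (p : seq (edge G)) (u v : V) :
  is_walk u p v -> u \in S -> v \notin S ->
  exists2 e : edge G, e \in p & (tail e \in S) && (Defs.head e \notin S).
Proof.
elim: p u => [|e p IHp] u /=; first by move/eqP=> -> ->.
case/andP=> /eqP tail_e walk_p uS vNS.
case headS: (Defs.head e \in S).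
  have [e' e'p leaves_e'] := IHp _ walk_p headS vNS.
  by exists e'; rewrite // inE e'p orbT.
by exists e; rewrite ?inE ?eqxx // tail_e uS headS.
Qed.

Lemma cut_out_le_congestion (W G : digraph V) (Pi : embedding W G) (S : {set V}) :
  is_embedding Pi -> (cut_out W S <= congestion Pi * cut_out G S)%N.
Proof.
move=> embPi; rewrite /cut_out.
set A := [set f : edge W | _]; set C := [set e : edge G | _].
have count_routes : (#|A| <= \sum_(e in C) \sum_(f in A) (e \in Pi f : nat))%N.
  rewrite exchange_big -sum1_card; apply: leq_sum => f; rewrite inE => /andP[fS fNS].
  have [e ePi eC] := is_walk_leaves (embPi f) fS fNS.
  by rewrite (bigD1 e) ?inE //= ePi leq_addr.
apply: leq_trans count_routes _; rewrite mulnC -sum1_card big_distrl /=.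
apply: leq_sum => e _; rewrite mul1n -big_mkcondr /=.
apply: leq_trans (leq_bigmax e); rewrite sum1_card.
by apply: subset_leq_card; apply/subsetP => f; rewrite !inE => /andP[].
Qed.

Lemma deg_rev_graph (G : digraph V) (v : V) : deg (rev_graph G) v = deg G v.
Proof. by rewrite /deg addnC. Qed.

Lemma vol_rev_graph (G : digraph V) (S : {set V}) : vol (rev_graph G) S = vol G S.
Proof. by apply: eq_bigr => v _; rewrite deg_rev_graph. Qed.

Lemma cut_out_rev_graph (G : digraph V) (S : {set V}) :
  cut_out (rev_graph G) (~: S) = cut_out G S.
Proof. by apply: eq_card => e; rewrite !inE negbK andbC. Qed.

Lemma vsum0 (S : {set V}) : vsum (fun _ => 0%N) S = 0%N.
Proof. exact: big1. Qed.

End Graphs.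

Section OutWitness.
Variables (F : realFieldType) (V : finType) (G W : digraph V) (Pi : embedding W G).
Variables (gamma : V -> nat) (R : nat) (phi psi : F).
Hypothesis ow : @out_witness V F G (fun _ => 0%N) gamma R phi psi W Pi.

Lemma out_witness0_vol_le (S : {set V}) : (vol G S <= vol W S)%N.
Proof.
have [_ _ deg_bounds _ _] := ow.
apply: leq_sum => v _; have [+ _] := deg_bounds v.
by rewrite addn0 ler_nat.
Qed.

Lemma out_witness0_cut_ge (S : {set V}) :
  (vsum gamma S <= vsum gamma (~: S))%N -> psi * (vol W S)%:R <= (cut_out W S)%:R.
Proof. by have [_ _ _ expW _] := ow => /expW; rewrite !vsum0 !addn0. Qed.

Lemma out_witness0_cut_transfer (S : {set V}) :
  0 < psi * phi -> psi * phi * (cut_out W S)%:R <= (cut_out G S)%:R.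
Proof.
move=> psiphi_gt0; have [embPi _ _ _ cong_le] := ow.
have cut_le : (cut_out W S)%:R <= (congestion Pi)%:R * (cut_out G S)%:R :> F.
  by rewrite -natrM ler_nat cut_out_le_congestion.
apply: le_trans (ler_wpM2l (ltW psiphi_gt0) cut_le) _.
rewrite mulrA ler_piMl // -[leRHS](mulfV (lt0r_neq0 psiphi_gt0)).
by rewrite ler_pM2l.
Qed.

Lemma out_witness0_cut_lower (S : {set V}) :
  0 < phi -> 0 < psi -> (vsum gamma S <= vsum gamma (~: S))%N ->
  psi ^+ 2 * phi * (vol G S)%:R <= (cut_out G S)%:R.
Proof.
move=> phi_gt0 psi_gt0 balanced.
apply: le_trans (out_witness0_cut_transfer S (mulr_gt0 psi_gt0 phi_gt0)).
rewrite expr2 -!mulrA ler_pM2l // mulrCA ler_pM2l //.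
apply: le_trans (out_witness0_cut_ge balanced).
by rewrite ler_pM2l // ler_nat out_witness0_vol_le.
Qed.

End OutWitness.

(* [G'] stands for the reversed graph; keeping it abstract lets the lemma serve
   both directions, as [rev_graph (rev_graph G)] is not convertible to [G]. *)
Lemma out_witness0_pair_no_out_sparse (F : realFieldType) (V : finType)
    (G G' W1 W2 : digraph V) (Pi1 : embedding W1 G) (Pi2 : embedding W2 G')
    (gamma : V -> nat) (R : nat) (phi psi : F) :
  0 < phi -> 0 < psi ->
  @out_witness V F G (fun _ => 0%N) gamma R phi psi W1 Pi1 ->
  @out_witness V F G' (fun _ => 0%N) gamma R phi psi W2 Pi2 ->
  (forall S, vol G' S = vol G S) -> (forall S, cut_out G' (~: S) = cut_out G S) ->
  forall S : {set V}, ~ out_sparse G (psi ^+ 2 * phi) S.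
Proof.
move=> phi_gt0 psi_gt0 ow1 ow2 volG' cutG' S [volS_le]; apply/negP; rewrite -leNgt.
have [balanced | unbalanced] := leqP (vsum gamma S) (vsum gamma (~: S)).
  exact: out_witness0_cut_lower ow1 _ phi_gt0 psi_gt0 balanced.
have balancedC : (vsum gamma (~: S) <= vsum gamma (~: ~: S))%N by rewrite setCK ltnW.
have := out_witness0_cut_lower ow2 phi_gt0 psi_gt0 balancedC.
rewrite cutG' volG'; apply: le_trans.
by apply: ler_wpM2l; rewrite ?ler_nat // mulr_ge0 ?exprn_ge0 ?ltW.
Qed.

Theorem mainTheorem2 (F : realFieldType) (V : finType) (G : digraph V)
  (gamma : V -> nat) (R : nat) (phi psi : F) :
  0 < phi < 1 -> 0 < psi < 1 ->
  (exists (W : digraph V) (Pi : embedding W G),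
      @witness V F G (fun _ => 0%N) gamma R phi psi W Pi) ->
  @expander V F G (psi ^+ 2 * phi).
Proof.
case/andP=> phi_gt0 _ /andP[psi_gt0 _] [W [Pi [ow ow_rev]]].
split.
  exact: out_witness0_pair_no_out_sparse phi_gt0 psi_gt0 ow ow_rev
           (vol_rev_graph G) (@cut_out_rev_graph _ G).
apply: (out_witness0_pair_no_out_sparse phi_gt0 psi_gt0 ow_rev ow) => S.
  by rewrite vol_rev_graph.
by rewrite -cut_out_rev_graph setCK.
Qed.
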